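(* Let $\Omega\subset\mathbb{R}^n$ ($n\ge1$) be a bounded domain, $T>0$, $\delta\in(0,1)\cup(1,2)$, $\bar Q:=\bar\Omega\times[0,T]$ and $Q:=\Omega\times(0,T]$. Let $u$ be a classical solution of the initial-boundary value problem described in the context, and suppose $u\in C^{2,\bar\delta}(\bar Q)$. Then the initial value $\phi_0$ satisfies $L_0\phi_0(x)=f(x,0)$ for all $x\in\Omega$, where \[ L_0w(x):=-\sum_{i,j=1}^n p_{ij}(x,0)\frac{\partial^2 w}{\partial x_i\partial x_j}(x)+\sum_{i=1}^n q_i(x,0)\frac{\partial w}{\partial x_i}(x)+r(x,0)w(x). \]
   Context: Set $\bar\delta=1$ if $0<\delta<1$ and $\bar\delta=2$ if $1<\delta<2$. The Caputo fractional derivative is \[ D_t^\delta g(x,t):=\frac{1}{\Gamma(\bar\delta-\delta)}\int_0^t (t-s)^{\bar\delta-\delta-1}\,\frac{\partial^{\bar\delta}g(x,s)}{\partial s^{\bar\delta}}\,ds,\qquad x\in\Omega,\ 0<t\le T. \] The problem is: $D_t^\delta u-\sum_{i,j=1}^n p_{ij}(x,t)\,\partial^2u/\partial x_i\partial x_j+\sum_{i=1}^n q_i(x,t)\,\partial u/\partial x_i+r(x,t)u=f(x,t)$ for $(x,t)\in Q$; $u(x,t)=\psi(x,t)$ for $(x,t)\in\partial\Omega\times(0,T]$; $u(x,0)=\phi_0(x)$ for $x\in\bar\Omega$; and, only when $1<\delta<2$, $u_t(x,0)=\phi_1(x)$ for $x\in\Omega$. The spatial operator is uniformly elliptic on $Q$;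 $p_{ij},q_i,r,\psi,\phi_0,\phi_1$ are continuous on the closures of their domains; $f$ is continuous on $\bar Q$; and $\phi_0(x)=\psi(x,0)$ for all $x\in\partial\Omega$. A classical solution is a function $u$ continuous on $\bar Q$ for which $D_t^\delta u$, $\partial u/\partial x_i$, $\partial^2u/\partial x_i\partial x_j$ exist at every point of $Q$ and the equation and conditions hold pointwise. $C^{2,\bar\delta}(\bar Q)$ denotes the set of $w\in C(\bar Q)$ such that $\partial w/\partial x_i$, $\partial^2w/\partial x_i\partial x_j$ ($1\le i,j\le n$) and $\partial^k w/\partial t^k$ for $k=1,\bar\delta$ all lie in $C(\bar Q)$. *)

From HB Require Import structures.
From mathcomp Require Import all_boot all_order all_algebra.
From mathcomp Require Import all_classical all_reals all_analysis.
Set Implicit Arguments. Unset Strict Implicit. Unset Printing Implicit Defensive.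
Import Order.TTheory GRing.Theory Num.Theory.
Import numFieldNormedType.Exports.
Local Open Scope classical_set_scope.
Local Open Scope ring_scope.

Section Defs.
Variable R : realType.
Variable n : nat.

Definition evec (i : 'I_n) : 'rV[R]_n := delta_mx 0 i.

Definition Gammaf (z : R) : R :=
  Rintegral lebesgue_measure `]0%R, +oo[ (fun s : R => s `^ (z - 1) * expR (- s)).

Definition dbar (delta : R) : nat := if delta < 1 then 1%N else 2%N.

Fixpoint tder (k : nat) (g : R -> R) : R -> R :=
  match k with O => g | S k' => derive1 (tder k' g) end.

Definition Qbar (Om : set 'rV[R]_n) (T : R) : set ('rV[R]_n * R) :=
  [set z | closure Om z.1 /\ 0 <= z.2 <= T].

(* lateral closure  boundary(Omega) x [0,T]  (Omega open, so boundary = closure \ Omega) *)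
Definition Sbar (Om : set 'rV[R]_n) (T : R) : set ('rV[R]_n * R) :=
  [set z | (closure Om `\` Om) z.1 /\ 0 <= z.2 <= T].

Definition uncurry2 (w : 'rV[R]_n -> R -> R) : 'rV[R]_n * R -> R :=
  fun z => w z.1 z.2.

Definition dx (w : 'rV[R]_n -> R -> R) (i : 'I_n) (x : 'rV[R]_n) (t : R) : R :=
  'D_(evec i) (fun y => w y t) x.
Definition dxx (w : 'rV[R]_n -> R -> R) (i j : 'I_n) (x : 'rV[R]_n) (t : R) : R :=
  'D_(evec i) (fun y => dx w j y t) x.

Definition dx_exists (w : 'rV[R]_n -> R -> R) (i : 'I_n) (x : 'rV[R]_n) (t : R) :=
  derivable (fun y => w y t) x (evec i).
Definition dxx_exists (w : 'rV[R]_n -> R -> R) (i j : 'I_n) (x : 'rV[R]_n) (t : R) :=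
  derivable (fun y => dx w j y t) x (evec i).

Definition caputo_integrand (delta : R) (g : R -> R) (t : R) : R -> R :=
  fun s => (t - s) `^ ((dbar delta)%:R - delta - 1) * tder (dbar delta) g s.

Definition caputo (delta : R) (w : 'rV[R]_n -> R -> R) (x : 'rV[R]_n) (t : R) : R :=
  (Gammaf ((dbar delta)%:R - delta))^-1 *
  Rintegral lebesgue_measure `]0%R, t[ (caputo_integrand delta (w x) t).

Definition caputo_exists (delta : R) (w : 'rV[R]_n -> R -> R) (x : 'rV[R]_n) (t : R) :=
  (forall k : nat, (k < dbar delta)%N -> forall s, 0 < s < t ->
      derivable (tder k (w x)) s 1) /\
  lebesgue_measure.-integrable `]0%R, t[ (EFin \o caputo_integrand delta (w x) t).

Definition Lop (p : 'I_n -> 'I_n -> 'rV[R]_n -> R -> R) (q : 'I_n -> 'rV[R]_n -> R -> R)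
  (r : 'rV[R]_n -> R -> R) (w : 'rV[R]_n -> R -> R) (x : 'rV[R]_n) (t : R) : R :=
  - (\sum_(i < n) \sum_(j < n) p i j x t * dxx w i j x t)
  + \sum_(i < n) q i x t * dx w i x t + r x t * w x t.

Definition L0 (p : 'I_n -> 'I_n -> 'rV[R]_n -> R -> R) (q : 'I_n -> 'rV[R]_n -> R -> R)
  (r : 'rV[R]_n -> R -> R) (w : 'rV[R]_n -> R) (x : 'rV[R]_n) : R :=
  - (\sum_(i < n) \sum_(j < n) p i j x 0 * 'D_(evec i) ('D_(evec j) w) x)
  + \sum_(i < n) q i x 0 * 'D_(evec i) w x + r x 0 * w x.

(* C^{2,dbar}(Qbar): w continuous on Qbar; the spatial derivatives
   dw/dx_i, d2w/dx_i dx_j exist at every (x,t) with x in Omega, 0<=t<=T,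
   and the time derivatives d^k w/dt^k (k = 1, dbar) exist at every interior
   point (x,t), x in Omega, 0<t<T; each of them coincides there with a
   function continuous on Qbar (i.e. extends continuously to Qbar). *)
Definition C2dbar (Om : set 'rV[R]_n) (T delta : R) (w : 'rV[R]_n -> R -> R) :=
  {within Qbar Om T, continuous (uncurry2 w)} /\
  (forall i : 'I_n, exists g : 'rV[R]_n * R -> R,
     {within Qbar Om T, continuous g} /\
     forall x t, Om x -> 0 <= t <= T -> dx_exists w i x t /\ dx w i x t = g (x, t)) /\
  (forall i j : 'I_n, exists g : 'rV[R]_n * R -> R,
     {within Qbar Om T, continuous g} /\
     forall x t, Om x -> 0 <= t <= T ->
       dx_exists w j x t /\ dxx_exists w i j x t /\ dxx w i j x t = g (x, t)) /\
  (forall k : nat, (1 <= k <= dbar delta)%N -> exists g : 'rV[R]_n * R -> R,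
     {within Qbar Om T, continuous g} /\
     forall x t, Om x -> 0 < t < T ->
       (forall m, (m < k)%N -> derivable (tder m (w x)) t 1) /\ tder k (w x) t = g (x, t)).

Definition classical_solution (Om : set 'rV[R]_n) (T delta : R)
  (p : 'I_n -> 'I_n -> 'rV[R]_n -> R -> R) (q : 'I_n -> 'rV[R]_n -> R -> R)
  (r f psi : 'rV[R]_n -> R -> R) (phi0 phi1 : 'rV[R]_n -> R)
  (u : 'rV[R]_n -> R -> R) :=
  {within Qbar Om T, continuous (uncurry2 u)} /\
  (forall x t, Om x -> 0 < t <= T ->
     caputo_exists delta u x t /\
     (forall i, dx_exists u i x t) /\
     (forall i j, dx_exists u j x t /\ dxx_exists u i j x t) /\
     caputo delta u x t + Lop p q r u x t = f x t) /\
  (forall x t, (closure Om `\` Om) x -> 0 < t <= T -> u x t = psi x t) /\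
  (forall x, closure Om x -> u x 0 = phi0 x) /\
  (1 < delta -> forall x, Om x ->
     (fun h => (u x h - u x 0) / h) @ 0^'+ --> phi1 x).
End Defs.

From HB Require Import structures.
From mathcomp Require Import all_boot all_order all_algebra.
From mathcomp Require Import all_classical all_reals all_analysis.
From mathcomp Require Import measurable_realfun ring.
Import Order.TTheory GRing.Theory Num.Theory.
Import numFieldNormedType.Exports.
Local Open Scope classical_set_scope.
Local Open Scope ring_scope.
Set Implicit Arguments. Unset Strict Implicit.

(* Let t -> 0+ in the equation D_t^delta u + L u = f at a fixed x in Omega.
   The coefficients, f, u and its spatial derivatives converge by continuity
   on Qbar, and since u(., 0) = phi0 on the open set Omega, the spatial
   derivatives of u(., 0) are those of phi0; hence L u(x, t) -> L0 phi0 (x).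
   The Caputo term tends to 0: d^dbar u / dt^dbar is bounded near t = 0 and
   int_0^t (t - s)^(dbar - delta - 1) ds <= t^(dbar - delta) / (dbar - delta). *)

Section abel_kernel.
Variable R : realType.
Local Notation mu := (@lebesgue_measure R).

Lemma measurable_powR_sub (t b : R) :
  measurable_fun setT (fun s : R => (t - s) `^ b).
Proof.
exact: measurableT_comp (@measurable_powR R b)
  (measurable_funB (measurable_cst t) (@measurable_id _ R setT)).
Qed.

Lemma is_derive_powR_sub (b t s : R) : s < t ->
  is_derive s 1 (fun s => (t - s) `^ b) (b * (t - s) `^ (b - 1) * -1).
Proof.
move=> st.
have dsub : is_derive s 1 (fun s => t - s) (-1).
  have -> : (fun s => t - s) = cst t - id by [].
  by apply: is_derive_eq; rewrite sub0r.
have dpow : is_derive (t - s) 1 (fun x : R => x `^ b) (b * (t - s) `^ (b - 1)).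
  by apply: is_derive1_powR; rewrite subr_gt0.
exact: (@is_derive1_comp R (fun x => x `^ b) (fun s => t - s) s _ _ dpow dsub).
Qed.

Lemma integral_powR_sub_itvcc (a c t : R) : 0 < a -> 0 < c < t ->
  (\int[mu]_(s in `[0%R, c]) ((t - s) `^ (a - 1))%:E
   = ((t `^ a - (t - c) `^ a) / a)%:E)%E.
Proof.
move=> a0 /andP[c0 ct].
pose G s := - (a^-1 * (t - s) `^ a).
have G' s : s < t -> is_derive s 1 G ((t - s) `^ (a - 1)).
  move=> st.
  apply: (is_derive_eq (is_deriveN (is_deriveZ a^-1 (is_derive_powR_sub a st)))).
  by rewrite -[_ *: _]/(_ * _) mulrN1 mulrN opprK mulrA mulVf ?mul1r ?gt_eqF.
have cdt s : s <= c -> s < t by move=> /le_lt_trans; apply.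
rewrite (@continuous_FTC2 _ _ G) //.
- by rewrite /G subr0 -EFinB; congr (_%:E); field; rewrite gt_eqF.
- apply: derivable_within_continuous => s /[!in_itv] /andP[_ /cdt st].
  by case: (is_derive_powR_sub (a - 1) st).
- split.
  + by move=> s /[!in_itv] /andP[_ /ltW /cdt /G'] [].
  + apply/cvg_at_right_filter/differentiable_continuous/derivable1_diffP.
    by case: (G' 0 (lt_trans c0 ct)).
  + apply/cvg_at_left_filter/differentiable_continuous/derivable1_diffP.
    by case: (G' c ct).
- by move=> s /[!in_itv] /andP[_ /ltW /cdt /G'] [_ <-]; rewrite derive1E.
Qed.

Lemma integral_powR_sub_segment_le (a c t : R) : 0 < a -> 0 < t -> c < t ->
  (\int[mu]_(s in `[0%R, c]) ((t - s) `^ (a - 1))%:E <= (t `^ a / a)%:E)%E.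
Proof.
move=> a0 t0 ct; pose c' := Num.max c (t / 2).
have c'0 : 0 < c' by rewrite lt_max divr_gt0 ?orbT.
have c't : c' < t by rewrite gt_max ct ltr_pdivrMr // ltr_pMr // ltr1n.
apply: (@le_trans _ _ (\int[mu]_(s in `[0%R, c']) ((t - s) `^ (a - 1))%:E)%E).
  apply: ge0_subset_integral => //.
  - by apply/measurable_EFinP/measurable_funTS; exact: measurable_powR_sub.
  - by move=> s _; rewrite lee_fin powR_ge0.
  - by apply: subset_itvl; rewrite bnd_simp le_max lexx.
rewrite integral_powR_sub_itvcc ?c'0 // lee_fin ler_pM2r ?invr_gt0 //.
by rewrite gerBl powR_ge0.
Qed.

(* The kernel is unbounded near t when a < 1: exhaust [0, t[ by the segments
   [0, t - 1/(k+1)] and use monotone convergence. *)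
Lemma integral_powR_sub_le (a t : R) : 0 < a -> 0 < t ->
  (\int[mu]_(s in `]0%R, t[) ((t - s) `^ (a - 1))%:E <= (t `^ a / a)%:E)%E.
Proof.
move=> a0 t0.
have mpow : measurable_fun [set: R] (fun s : R => ((t - s) `^ (a - 1))%:E).
  by apply/measurable_EFinP; exact: measurable_powR_sub.
have pow_ge0 (A : set R) (s : R) : A s -> (0 <= ((t - s) `^ (a - 1))%:E)%E.
  by rewrite lee_fin powR_ge0.
pose F k : set R := [set` `[0%R, t - k.+1%:R^-1]].
have F_nd : nondecreasing_seq F.
  apply/nondecreasing_seqP => k; rewrite subsetEset; apply: subset_itvl.
  by rewrite bnd_simp lerB // lef_pV2 ?posrE // ler_nat.
apply: (@le_trans _ _ (\int[mu]_(s in `[0%R, t[) ((t - s) `^ (a - 1))%:E)%E).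
  apply: ge0_subset_integral => //; [exact: measurable_funTS | exact: pow_ge0 |].
  by apply: subset_itvr; rewrite bnd_simp.
rewrite (itv_bnd_open_bigcup true).
have := @ge0_nondecreasing_set_cvg_integral _ (measurableTypeR R) R F
  (fun s => ((t - s) `^ (a - 1))%:E) mu F_nd.
move=> /(_ _ _ _)/cvge_to_le; apply.
- by move=> k; rewrite /F.
- by move=> k; exact: measurable_funTS.
- by move=> k; exact: pow_ge0.
- apply: nearW => k; apply: integral_powR_sub_segment_le => //.
  by rewrite ltrBlDr ltrDl.
Qed.

Lemma norm_Rintegral_powR_sub_le (a t M : R) (h : R -> R) : 0 < a -> 0 < t ->
  mu.-integrable `]0%R, t[ (EFin \o (fun s => (t - s) `^ (a - 1) * h s)) ->
  (forall s, 0 < s < t -> `|h s| <= M) ->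
  `|Rintegral mu `]0%R, t[ (fun s => (t - s) `^ (a - 1) * h s)|
    <= M * (t `^ a / a).
Proof.
move=> a0 t0 hint hM.
have M0 : 0 <= M.
  by apply: le_trans (hM (t / 2) _); rewrite ?divr_gt0 ?ltr_pdivrMr ?ltr_pMr ?ltr1n.
have mD : measurable (`]0%R, t[ : set (measurableTypeR R)) by [].
apply: (le_trans (le_normr_Rintegral mD hint)).
have iabs := integrable_abse hint.
rewrite /Rintegral -lee_fin fineK; last exact: integrable_fin_num.
apply: (@le_trans _ _ (\int[mu]_(s in `]0%R, t[) (M * (t - s) `^ (a - 1))%:E)%E).
  apply: ge0_le_integral => //.
  - exact: measurable_int iabs.
  - apply/measurable_EFinP/measurable_funTS/measurable_funM => //.
    exact: measurable_powR_sub.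
  - move=> s; rewrite /= in_itv /= => /andP[s0 st].
    rewrite lee_fin normrM ger0_norm ?powR_ge0 // mulrC.
    by apply: ler_wpM2r; [exact: powR_ge0 | apply: hM; rewrite s0 st].
under eq_integral do rewrite EFinM.
rewrite ge0_integralZl //; first last.
- by move=> s _; rewrite lee_fin powR_ge0.
- by apply/measurable_EFinP/measurable_funTS; exact: measurable_powR_sub.
by rewrite EFinM lee_wpmul2l ?lee_fin // integral_powR_sub_le.
Qed.

Lemma near_right_forall_lt (x : R) (P : R -> Prop) :
  (\forall s \near x^'+, P s) -> \forall t \near x^'+, forall s, x < s < t -> P s.
Proof.
move=> [e /= e0 xeP]; exists e => //= t xte xt s /andP[xs st].
apply: xeP => //=; apply: le_lt_trans xte.
by rewrite !ltr0_norm ?subr_lt0 // lerN2 lerD2l lerN2; exact: ltW.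
Qed.

Lemma Rintegral_powR_sub_cvg0 (a M : R) (h : R -> R) : 0 < a ->
  (\forall t \near 0^'+,
     mu.-integrable `]0%R, t[ (EFin \o (fun s => (t - s) `^ (a - 1) * h s))) ->
  (\forall s \near 0^'+, `|h s| <= M) ->
  Rintegral mu `]0%R, t[ (fun s => (t - s) `^ (a - 1) * h s) @[t --> 0^'+] --> 0.
Proof.
move=> a0 hint /near_right_forall_lt hM.
have bound_cvg0 : (fun t => M * (t `^ a / a)) @ 0^'+ --> M * (0 / a).
  by apply: cvgM; [exact: cvg_cst | apply: cvgM; [exact: powR_cvg0 | exact: cvg_cst]].
rewrite mul0r mulr0 in bound_cvg0.
have Nbound_cvg0 : (fun t => - (M * (t `^ a / a))) @ 0^'+ --> - 0 by exact: cvgN.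
rewrite oppr0 in Nbound_cvg0.
apply: (squeeze_cvgr _ Nbound_cvg0 bound_cvg0).
near=> t; rewrite -ler_norml.
apply: (@norm_Rintegral_powR_sub_le a t M h a0).
- by near: t; exact: nbhs_right_gt.
- by near: t.
- by near: t.
Unshelve. all: end_near. Qed.
End abel_kernel.

Lemma cvg_sum (K : numFieldType) (V : normedModType K) (T : Type)
    (F : set_system T) (FF : Filter F) (m : nat) (f : 'I_m -> T -> V) (l : 'I_m -> V) :
  (forall i, f i t @[t --> F] --> l i) ->
  \sum_(i < m) f i t @[t --> F] --> \sum_(i < m) l i.
Proof. by move=> fl; apply: cvg_big => //; exact: add_continuous. Qed.

Lemma derive_eq_on_open (R : numFieldType) (V W : normedModType R)
    (A : set V) (f g : V -> W) (v y : V) :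
  open A -> A y -> (forall z, A z -> f z = g z) -> 'D_v f y = 'D_v g y.
Proof.
move=> oA Ay fg; apply: near_eq_derive; near=> z; apply: fg.
by near: z; exact: open_nbhs_nbhs.
Unshelve. all: end_near. Qed.

Lemma dbar_sub_gt0 (R : realType) (delta : R) :
  0 < delta < 1 \/ 1 < delta < 2 -> 0 < (dbar delta)%:R - delta.
Proof.
rewrite /dbar; case=> /andP[d0 d1]; first by rewrite d1 subr_gt0.
by rewrite [delta < 1]ltNge (ltW d0) /= subr_gt0.
Qed.

Section cylinder.
Variables (R : realType) (n : nat) (Om : set 'rV[R]_n) (T : R).
Hypothesis T_gt0 : 0 < T.

Lemma near_right0_itvoo : \forall t \near 0^'+, 0 < t < T.
Proof.
near=> t; apply/andP; split; near: t; [exact: nbhs_right_gt | exact: nbhs_right_lt].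
Unshelve. all: end_near. Qed.

Lemma cvg_at0_within_Qbar (h : 'rV[R]_n * R -> R) x :
  {within Qbar Om T, continuous h} -> closure Om x ->
  h (x, t) @[t --> 0^'+] --> h (x, 0).
Proof.
move=> hc cx.
have Qx0 : Qbar Om T (x, 0) by split => //=; rewrite lexx ltW.
apply: cvg_comp ((@subspace_continuousP _ (Qbar Om T) _ h).1 hc (x, 0) Qx0).
move=> P /= [e /= [/nbhs_singleton e1 e2] eP].
near=> t; apply: eP.
- by split => //; near: t; apply: (@cvg_within _ (nbhs (0 : R))); exact: e2.
- have /andP[t0 tT] : 0 < t < T by near: t; exact: near_right0_itvoo.
  by split => //=; rewrite !ltW.
Unshelve. all: end_near. Qed.

Lemma cvg_at0_within_Qbar_eq (g : 'rV[R]_n * R -> R) (w : R -> R) x :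
  {within Qbar Om T, continuous g} -> closure Om x ->
  (forall t, 0 <= t <= T -> w t = g (x, t)) -> w t @[t --> 0^'+] --> w 0.
Proof.
move=> gc cx wg; rewrite wg ?lexx ?ltW //.
apply: (cvg_trans _ (cvg_at0_within_Qbar gc cx)); apply: near_eq_cvg.
near=> t; have /andP[t0 tT] : 0 < t < T by near: t; exact: near_right0_itvoo.
by rewrite wg // !ltW.
Unshelve. all: end_near. Qed.

Lemma caputo_cvg0 (delta : R) (w : 'rV[R]_n -> R -> R) x :
  0 < delta < 1 \/ 1 < delta < 2 -> closure Om x ->
  (forall t, 0 < t <= T -> caputo_exists delta w x t) ->
  (exists2 g : 'rV[R]_n * R -> R, {within Qbar Om T, continuous g} &
     forall t, 0 < t < T -> tder (dbar delta) (w x) t = g (x, t)) ->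
  caputo delta w x t @[t --> 0^'+] --> 0.
Proof.
move=> hdelta cx wcap [g gc wg].
rewrite -[X in _ --> X](mulr0 (Gammaf ((dbar delta)%:R - delta))^-1).
apply: cvgM; first exact: cvg_cst.
apply: (Rintegral_powR_sub_cvg0 (M := `|g (x, 0)| + 1) (dbar_sub_gt0 hdelta)).
- near=> t; have /andP[t0 tT] : 0 < t < T by near: t; exact: near_right0_itvoo.
  by apply: (wcap t _).2; rewrite t0 ltW.
- near=> s; rewrite wg; last by near: s; exact: near_right0_itvoo.
  by near: s; apply: (cvgr_norm_le _ (cvg_at0_within_Qbar gc cx)); rewrite ltrDl.
Unshelve. all: end_near. Qed.

Lemma Lop_cvg_L0 (delta : R) p q r (u : 'rV[R]_n -> R -> R) phi0 x :
  open Om -> Om x ->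
  (forall i j, {within Qbar Om T, continuous (uncurry2 (p i j))}) ->
  (forall i, {within Qbar Om T, continuous (uncurry2 (q i))}) ->
  {within Qbar Om T, continuous (uncurry2 r)} ->
  C2dbar Om T delta u -> (forall z, Om z -> u z 0 = phi0 z) ->
  Lop p q r u x t @[t --> 0^'+] --> L0 p q r phi0 x.
Proof.
move=> Omo Ox cp cq cr [cu [udx [udxx _]]] u0.
have cx := subset_closure Ox.
have lim_dx i : dx u i x t @[t --> 0^'+] --> 'D_(evec R i) phi0 x.
  have [g [gc ug]] := udx i.
  rewrite -(derive_eq_on_open _ Omo Ox u0).
  by apply: (cvg_at0_within_Qbar_eq gc cx) => t ht; exact: (ug x t Ox ht).2.
have lim_dxx i j :
    dxx u i j x t @[t --> 0^'+] --> 'D_(evec R i) ('D_(evec R j) phi0) x.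
  have [g [gc ug]] := udxx i j.
  have -> : 'D_(evec R i) ('D_(evec R j) phi0) x = dxx u i j x 0.
    apply: (derive_eq_on_open _ Omo Ox) => z Oz.
    by rewrite /dx (derive_eq_on_open _ Omo Oz u0).
  by apply: (cvg_at0_within_Qbar_eq gc cx) => t ht; exact: (ug x t Ox ht).2.2.
rewrite /Lop /L0 -(u0 x Ox); apply: cvgD; [apply: cvgD|].
- apply: cvgN; apply: cvg_sum => i; apply: cvg_sum => j.
  exact: cvgM (cvg_at0_within_Qbar (cp i j) cx) (lim_dxx i j).
- by apply: cvg_sum => i; exact: cvgM (cvg_at0_within_Qbar (cq i) cx) (lim_dx i).
- exact: cvgM (cvg_at0_within_Qbar cr cx) (cvg_at0_within_Qbar cu cx).
Qed.
End cylinder.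

Theorem theorem2p3 (R : realType) (n : nat) (Om : set 'rV[R]_n) (T delta : R)
  (p : 'I_n -> 'I_n -> 'rV[R]_n -> R -> R) (q : 'I_n -> 'rV[R]_n -> R -> R)
  (r f psi : 'rV[R]_n -> R -> R) (phi0 phi1 : 'rV[R]_n -> R)
  (u : 'rV[R]_n -> R -> R) :
  (1 <= n)%N ->
  (* Omega is a bounded domain *)
  open Om -> connected Om -> Om !=set0 -> bounded_set Om ->
  0 < T ->
  (0 < delta < 1 \/ 1 < delta < 2) ->
  (* uniform ellipticity on Q = Omega x (0,T] *)
  (exists2 lam : R, 0 < lam & forall x t, Om x -> 0 < t <= T ->
     forall xi : 'rV[R]_n,
       lam * (\sum_(i < n) xi 0 i ^+ 2) <=
       \sum_(i < n) \sum_(j < n) p i j x t * xi 0 i * xi 0 j) ->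
  (* continuity of the data on the closures of their domains *)
  (forall i j, {within Qbar Om T, continuous (uncurry2 (p i j))}) ->
  (forall i, {within Qbar Om T, continuous (uncurry2 (q i))}) ->
  {within Qbar Om T, continuous (uncurry2 r)} ->
  {within Qbar Om T, continuous (uncurry2 f)} ->
  {within Sbar Om T, continuous (uncurry2 psi)} ->
  {within closure Om, continuous phi0} ->
  {within closure Om, continuous phi1} ->
  (* compatibility condition *)
  (forall x, (closure Om `\` Om) x -> phi0 x = psi x 0) ->
  classical_solution Om T delta p q r f psi phi0 phi1 u ->
  C2dbar Om T delta u ->
  forall x, Om x -> L0 p q r phi0 x = f x 0.
Proof.
move=> _ Omo _ _ _ T0 hdelta _ cp cq cr cf _ _ _ _ [_ [sol [_ [init _]]]] u_reg x Ox.
have cx := subset_closure Ox.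
have u0 z : Om z -> u z 0 = phi0 z by move=> Oz; exact/init/subset_closure.
have lim_L := Lop_cvg_L0 T0 Omo Ox cp cq cr u_reg u0.
have lim_C : caputo delta u x t @[t --> 0^'+] --> 0.
  apply: (caputo_cvg0 T0 hdelta cx); first by move=> t /(sol x t Ox)[].
  have dbar_ge1 : (1 <= dbar delta <= dbar delta)%N.
    by rewrite leqnn andbT /dbar; case: ifP.
  have [_ [_ [_ /(_ _ dbar_ge1) [g [gc ug]]]]] := u_reg.
  by exists g => // t /(ug x t Ox)[].
have eq_L : \forall t \near 0^'+, f x t - caputo delta u x t = Lop p q r u x t.
  near=> t; have /andP[t0 tT] : 0 < t < T by near: t; exact: near_right0_itvoo.
  have tQ : 0 < t <= T by rewrite t0 ltW.
  by have [_ [_ [_ <-]]] := sol x t Ox tQ; rewrite addrC addKr.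
have lim_fC : Lop p q r u x t @[t --> 0^'+] --> f x 0 - 0.
  apply: cvg_trans (near_eq_cvg eq_L) _.
  exact: cvgB (cvg_at0_within_Qbar T0 cf cx) lim_C.
by rewrite subr0 in lim_fC; exact: (cvg_unique (@Rhausdorff R) lim_L lim_fC).
Unshelve. all: end_near. Qed.
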